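(* Let $T$ and $Q$ be session types and $X$ a type variable. If $S \in \mathrm{Sub}_{BU}(T[Q/X])$, then either $S = S'[Q/X]$ for some $S' \in \mathrm{Sub}_{BU}(T)$, or $S \in \mathrm{Sub}_{BU}(Q)$.
   Context: Session types (possibly containing free variables) are given by the grammar $T ::= \mathsf{end} \mid X \mid \mu X.T \mid {?}[T_1,\dots,T_n].S \mid {!}[T_1,\dots,T_n].S \mid \&\langle l_1:T_1,\dots,l_n:T_n\rangle \mid \oplus\langle l_1:T_1,\dots,l_n:T_n\rangle$ (input, output, branch, select), where $X$ ranges over type variables and $l_i$ over labels. Types are identified up to $\alpha$-conversion of bound variables, and all substitutions $T[Q/X]$ (replacing free occurrences of $X$ in $T$ by $Q$) are capture-avoiding. The set of bottom-up subterms $\mathrm{Sub}_{BU}(T)$ is defined by recursion on $T$: $\mathrm{Sub}_{BU}(\mathsf{end}) = \{\mathsf{end}\}$; $\mathrm{Sub}_{BU}(X) = \{X\}$; $\mathrm{Sub}_{BU}(\mu X.T') = \{\mu X.T'\} \cup \{S[\mu X.T'/X] \mid S \in \mathrm{Sub}_{BU}(T')\}$; $\mathrm{Sub}_{BU}(\&\langle l_i:T_i\rangle_{i}) = \{\&\langle l_i:T_i\rangle_i\} \cup \bigcup_i \mathrm{Sub}_{BU}(T_i)$, and likewise for $\oplus$; $\mathrm{Sub}_{BU}({?}[T_1,\dots,T_n].S) = \{{?}[T_1,\dots,T_n].S\} \cup \bigcup_i \mathrm{Sub}_{BU}(T_i) \cup \mathrm{Sub}_{BU}(S)$, and likewise for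 ${!}$. *)

(* Session types in pure de Bruijn representation:
   alpha-equivalence is syntactic equality; free type variables are the
   indices not bound by an enclosing mu; substitution is parallel,
   capture-avoiding substitution. *)
From Stdlib Require Import List Arith.
Import ListNotations.

Definition label := nat.

Inductive stype : Type :=
  | SEnd : stype
  | SVar : nat -> stype
  | SMu : stype -> stype                      (* mu X. T  (binds index 0 in T) *)
  | SIn : list stype -> stype -> stype        (* ?[T1..Tn].S *)
  | SOut : list stype -> stype -> stype       (* ![T1..Tn].S *)
  | SBranch : list (label * stype) -> stype
  | SSelect : list (label * stype) -> stype.

Definition up_ren (xi : nat -> nat) (n : nat) : nat :=
  match n with 0 => 0 | S m => S (xi m) end.

Fixpoint ren (xi : nat -> nat) (T : stype) : stype :=
  match T with
  | SEnd => SEnd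
  | SVar n => SVar (xi n)
  | SMu T' => SMu (ren (up_ren xi) T')
  | SIn ts U0 => SIn (map (ren xi) ts) (ren xi U0)
  | SOut ts U0 => SOut (map (ren xi) ts) (ren xi U0)
  | SBranch bs => SBranch (map (fun p => (fst p, ren xi (snd p))) bs)
  | SSelect bs => SSelect (map (fun p => (fst p, ren xi (snd p))) bs)
  end.

Definition up_sub (sigma : nat -> stype) (n : nat) : stype :=
  match n with 0 => SVar 0 | S m => ren S (sigma m) end.

Fixpoint subst (sigma : nat -> stype) (T : stype) : stype :=
  match T with
  | SEnd => SEnd
  | SVar n => sigma n
  | SMu T' => SMu (subst (up_sub sigma) T')
  | SIn ts U0 => SIn (map (subst sigma) ts) (subst sigma U0)
  | SOut ts U0 => SOut (map (subst sigma) ts) (subst sigma U0)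
  | SBranch bs => SBranch (map (fun p => (fst p, subst sigma (snd p))) bs)
  | SSelect bs => SSelect (map (fun p => (fst p, subst sigma (snd p))) bs)
  end.

(* T[Q/X] where X is the free variable with index x: replace X by Q,
   leave every other variable unchanged. *)
Definition single (x : nat) (Q : stype) (n : nat) : stype :=
  if Nat.eqb n x then Q else SVar n.

Definition substX (T : stype) (Q : stype) (x : nat) : stype :=
  subst (single x Q) T.

(* S'[mu X.T'/X] for S' living under the binder of mu X.T':
   index 0 := mu X.T', other indices decremented (they refer to the
   outer context). *)
Definition unfold_sub (U : stype) (n : nat) : stype :=
  match n with 0 => U | S m => SVar m end.

Fixpoint SubBU (T : stype) : stype -> Prop :=
  match T with
  | SEnd => fun V => V = SEnd
  | SVar n => fun V => V = SVar n
  | SMu T' => fun V =>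
      V = SMu T' \/
      exists S', SubBU T' S' /\ V = subst (unfold_sub (SMu T')) S'
  | SIn ts U => fun V =>
      V = SIn ts U \/
      (fix go (l : list stype) : Prop :=
         match l with [] => False | t :: l' => SubBU t V \/ go l' end) ts \/
      SubBU U V
  | SOut ts U => fun V =>
      V = SOut ts U \/
      (fix go (l : list stype) : Prop :=
         match l with [] => False | t :: l' => SubBU t V \/ go l' end) ts \/
      SubBU U V
  | SBranch bs => fun V =>
      V = SBranch bs \/
      (fix go (l : list (label * stype)) : Prop :=
         match l with [] => False | p :: l' => SubBU (snd p) V \/ go l' end) bs
  | SSelect bs => fun V =>
      V = SSelect bs \/
      (fix go (l : list (label * stype)) : Prop :=
         match l with [] => False | p :: l' => SubBU (snd p) V \/ go l' end) bs
  end.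

(* Substitution can be inverted on bottom-up subterms: a bottom-up subterm of
   [subst sigma T] is either [subst sigma] applied to a bottom-up subterm of [T],
   or a bottom-up subterm of some [sigma n] with [SVar n] itself a bottom-up
   subterm of [T] (free variables of [T] are among its bottom-up subterms).
   The only interesting case is [mu]: unfolding commutes with substitution, and
   the shifted [sigma n] met under the binder is handled by the same inversion
   for renamings.  The theorem is the instance [sigma = single x Q]. *)
From Stdlib Require Import List Arith.
Import ListNotations.

Section StypeInd.
Variable P : stype -> Prop.
Hypothesis HEnd : P SEnd.
Hypothesis HVar : forall n, P (SVar n).
Hypothesis HMu : forall T, P T -> P (SMu T).
Hypothesis HIn : forall ts U, (forall t, In t ts -> P t) -> P U -> P (SIn ts U).
Hypothesis HOut : forall ts U, (forall t, In t ts -> P t) -> P U -> P (SOut ts U).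
Hypothesis HBranch : forall bs, (forall p, In p bs -> P (snd p)) -> P (SBranch bs).
Hypothesis HSelect : forall bs, (forall p, In p bs -> P (snd p)) -> P (SSelect bs).

Fixpoint stype_nested_ind (T : stype) : P T :=
  let fix all_types (l : list stype) : Forall P l :=
    match l with
    | [] => Forall_nil P
    | t :: l' => Forall_cons t (stype_nested_ind t) (all_types l')
    end in
  let fix all_branches (l : list (label * stype)) : Forall (fun p => P (snd p)) l :=
    match l with
    | [] => Forall_nil _
    | p :: l' => Forall_cons p (stype_nested_ind (snd p)) (all_branches l')
    end in
  match T with
  | SEnd => HEnd
  | SVar n => HVar n
  | SMu T' => HMu T' (stype_nested_ind T')
  | SIn ts U => HIn ts U (proj1 (Forall_forall _ _) (all_types ts)) (stype_nested_ind U)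
  | SOut ts U => HOut ts U (proj1 (Forall_forall _ _) (all_types ts)) (stype_nested_ind U)
  | SBranch bs => HBranch bs (proj1 (Forall_forall _ _) (all_branches bs))
  | SSelect bs => HSelect bs (proj1 (Forall_forall _ _) (all_branches bs))
  end.
End StypeInd.

Ltac map_cases :=
  rewrite ?map_map; apply map_ext_in; intros; simpl; solve [auto | f_equal; auto].

Lemma ren_ext T xi zeta : (forall n, xi n = zeta n) -> ren xi T = ren zeta T.
Proof.
  revert xi zeta; induction T using stype_nested_ind; intros xi zeta Hxz;
    simpl; f_equal; auto.
  1: apply IHT; intros [|n]; simpl; auto.
  all: map_cases.
Qed.

Lemma subst_ext T s t : (forall n, s n = t n) -> subst s T = subst t T.
Proof.
  revert s t; induction T using stype_nested_ind; intros s t Hst; simpl; f_equal; auto.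
  1: apply IHT; intros [|n]; simpl; auto; now rewrite Hst.
  all: map_cases.
Qed.

Lemma ren_ren T xi zeta : ren xi (ren zeta T) = ren (fun n => xi (zeta n)) T.
Proof.
  revert xi zeta; induction T using stype_nested_ind; intros xi zeta; simpl; f_equal; auto.
  1: rewrite IHT; apply ren_ext; intros [|n]; reflexivity.
  all: map_cases.
Qed.

Lemma ren_subst T xi s : ren xi (subst s T) = subst (fun n => ren xi (s n)) T.
Proof.
  revert xi s; induction T using stype_nested_ind; intros xi s; simpl; f_equal; auto.
  1: rewrite IHT; apply subst_ext; intros [|n]; simpl; auto;
     rewrite !ren_ren; apply ren_ext; reflexivity.
  all: map_cases.
Qed.

Lemma subst_ren T xi s : subst s (ren xi T) = subst (fun n => s (xi n)) T.
Proof.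
  revert xi s; induction T using stype_nested_ind; intros xi s; simpl; f_equal; auto.
  1: rewrite IHT; apply subst_ext; intros [|n]; reflexivity.
  all: map_cases.
Qed.

Lemma subst_subst T s t : subst s (subst t T) = subst (fun n => subst s (t n)) T.
Proof.
  revert s t; induction T using stype_nested_ind; intros s t; simpl; f_equal; auto.
  1: rewrite IHT; apply subst_ext; intros [|n]; simpl; auto;
     rewrite subst_ren, ren_subst; apply subst_ext; reflexivity.
  all: map_cases.
Qed.

Lemma subst_id T : subst SVar T = T.
Proof.
  induction T using stype_nested_ind; simpl; f_equal; auto.
  1: rewrite <- IHT at 2; apply subst_ext; intros [|n]; reflexivity.
  1, 2: rewrite <- (map_id ts) at 2; apply map_ext_in; auto.
  all: rewrite <- (map_id bs) at 2; apply map_ext_in; intros [l U] Hin; simpl;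
    f_equal; exact (H _ Hin).
Qed.

(* Written so that the list recursions inside [SubBU] are convertible to
   instances of it. *)
Definition any {A : Type} (P : A -> Prop) : list A -> Prop :=
  fix go (l : list A) : Prop :=
    match l with [] => False | a :: l' => P a \/ go l' end.

Lemma any_exists {A : Type} (P : A -> Prop) (l : list A) : any P l <-> exists2 a, In a l & P a.
Proof.
  induction l as [|a l IH]; simpl.
  - split; [tauto | intros [? []]].
  - rewrite IH; split.
    + intros [Ha | [b Hb HPb]]; eauto.
    + intros [b [<- | Hb] HPb]; eauto.
Qed.

Lemma SubBU_SIn ts U V : SubBU (SIn ts U) V <->
  V = SIn ts U \/ (exists2 t, In t ts & SubBU t V) \/ SubBU U V.
Proof.
  change (SubBU (SIn ts U) V) with (V = SIn ts U \/ any (fun t => SubBU t V) ts \/ SubBU U V).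
  now rewrite any_exists.
Qed.

Lemma SubBU_SOut ts U V : SubBU (SOut ts U) V <->
  V = SOut ts U \/ (exists2 t, In t ts & SubBU t V) \/ SubBU U V.
Proof.
  change (SubBU (SOut ts U) V) with (V = SOut ts U \/ any (fun t => SubBU t V) ts \/ SubBU U V).
  now rewrite any_exists.
Qed.

Lemma SubBU_SBranch bs V : SubBU (SBranch bs) V <->
  V = SBranch bs \/ exists2 p, In p bs & SubBU (snd p) V.
Proof.
  change (SubBU (SBranch bs) V) with (V = SBranch bs \/ any (fun p => SubBU (snd p) V) bs).
  now rewrite any_exists.
Qed.

Lemma SubBU_SSelect bs V : SubBU (SSelect bs) V <->
  V = SSelect bs \/ exists2 p, In p bs & SubBU (snd p) V.
Proof.
  change (SubBU (SSelect bs) V) with (V = SSelect bs \/ any (fun p => SubBU (snd p) V) bs).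
  now rewrite any_exists.
Qed.

Lemma SubBU_refl T : SubBU T T.
Proof. destruct T; simpl; auto. Qed.

Lemma unfold_sub_shift U V : subst (unfold_sub U) (ren S V) = V.
Proof. rewrite subst_ren; apply subst_id. Qed.

Lemma unfold_sub_ren xi T V :
  subst (unfold_sub (ren xi (SMu T))) (ren (up_ren xi) V)
  = ren xi (subst (unfold_sub (SMu T)) V).
Proof. rewrite subst_ren, ren_subst; apply subst_ext; intros [|n]; reflexivity. Qed.

Lemma unfold_sub_subst sigma T V :
  subst (unfold_sub (subst sigma (SMu T))) (subst (up_sub sigma) V)
  = subst sigma (subst (unfold_sub (SMu T)) V).
Proof.
  rewrite !subst_subst; apply subst_ext; intros [|n]; simpl; auto.
  apply unfold_sub_shift.
Qed.

Lemma SubBU_ren_inv xi Q V :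
  SubBU (ren xi Q) V -> exists2 V', SubBU Q V' & V = ren xi V'.
Proof.
  revert xi V; induction Q using stype_nested_ind; intros xi V HV.
  - exists SEnd; [reflexivity | exact HV].
  - exists (SVar n); [reflexivity | exact HV].
  - destruct HV as [-> | [V0 [HV0 ->]]]; [exists (SMu Q); [apply SubBU_refl | reflexivity]|].
    destruct (IHQ _ _ HV0) as [V1 HV1 ->].
    exists (subst (unfold_sub (SMu Q)) V1); [simpl; eauto | apply unfold_sub_ren].
  - apply SubBU_SIn in HV as [-> | [[t' Ht' HV] | HV]].
    + exists (SIn ts Q); [apply SubBU_refl | reflexivity].
    + apply in_map_iff in Ht' as [t [<- Ht]].
      destruct (H t Ht _ _ HV) as [V' HV' ->]; exists V'; auto.
      apply SubBU_SIn; eauto.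
    + destruct (IHQ _ _ HV) as [V' HV' ->]; exists V'; auto.
      apply SubBU_SIn; auto.
  - apply SubBU_SOut in HV as [-> | [[t' Ht' HV] | HV]].
    + exists (SOut ts Q); [apply SubBU_refl | reflexivity].
    + apply in_map_iff in Ht' as [t [<- Ht]].
      destruct (H t Ht _ _ HV) as [V' HV' ->]; exists V'; auto.
      apply SubBU_SOut; eauto.
    + destruct (IHQ _ _ HV) as [V' HV' ->]; exists V'; auto.
      apply SubBU_SOut; auto.
  - apply SubBU_SBranch in HV as [-> | [p' Hp' HV]].
    + exists (SBranch bs); [apply SubBU_refl | reflexivity].
    + apply in_map_iff in Hp' as [p [<- Hp]].
      destruct (H p Hp _ _ HV) as [V' HV' ->]; exists V'; auto.
      apply SubBU_SBranch; eauto.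
  - apply SubBU_SSelect in HV as [-> | [p' Hp' HV]].
    + exists (SSelect bs); [apply SubBU_refl | reflexivity].
    + apply in_map_iff in Hp' as [p [<- Hp]].
      destruct (H p Hp _ _ HV) as [V' HV' ->]; exists V'; auto.
      apply SubBU_SSelect; eauto.
Qed.

Definition subst_origin (sigma : nat -> stype) (T V : stype) : Prop :=
  (exists2 V', SubBU T V' & V = subst sigma V') \/
  (exists2 n, SubBU T (SVar n) & SubBU (sigma n) V).

Lemma subst_origin_mono sigma t T V :
  (forall W, SubBU t W -> SubBU T W) -> subst_origin sigma t V -> subst_origin sigma T V.
Proof. intros Hsub [[V' HV' ->] | [n Hn HV]]; [left | right]; eauto. Qed.

Lemma subst_origin_self sigma T : subst_origin sigma T (subst sigma T).
Proof. left; exists T; [apply SubBU_refl | reflexivity]. Qed.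

Lemma SubBU_subst_inv sigma T V : SubBU (subst sigma T) V -> subst_origin sigma T V.
Proof.
  revert sigma V; induction T using stype_nested_ind; intros sigma V HV.
  - left; exists SEnd; [reflexivity | exact HV].
  - right; exists n; [reflexivity | exact HV].
  - destruct HV as [-> | [V0 [HV0 ->]]]; [apply (subst_origin_self sigma (SMu T))|].
    (* Index [0] of [up_sub sigma] is the bound variable, [S n] is [sigma n] shifted. *)
    destruct (IHT _ _ HV0) as [[V1 HV1 ->] | [[|n] Hn HV]].
    + left; exists (subst (unfold_sub (SMu T)) V1); [simpl; eauto | apply unfold_sub_subst].
    + simpl in HV; subst V0; apply (subst_origin_self sigma (SMu T)).
    + destruct (SubBU_ren_inv _ _ _ HV) as [V1 HV1 ->].
      right; exists n; [simpl; right; now exists (SVar (S n)) | now rewrite unfold_sub_shift].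
  - apply SubBU_SIn in HV as [-> | [[t' Ht' HV] | HV]]; [apply subst_origin_self| |].
    + apply in_map_iff in Ht' as [t [<- Ht]].
      apply (subst_origin_mono sigma t); auto; intros; apply SubBU_SIn; eauto.
    + apply (subst_origin_mono sigma T); auto; intros; apply SubBU_SIn; auto.
  - apply SubBU_SOut in HV as [-> | [[t' Ht' HV] | HV]]; [apply subst_origin_self| |].
    + apply in_map_iff in Ht' as [t [<- Ht]].
      apply (subst_origin_mono sigma t); auto; intros; apply SubBU_SOut; eauto.
    + apply (subst_origin_mono sigma T); auto; intros; apply SubBU_SOut; auto.
  - apply SubBU_SBranch in HV as [-> | [p' Hp' HV]]; [apply subst_origin_self|].
    apply in_map_iff in Hp' as [p [<- Hp]].
    apply (subst_origin_mono sigma (snd p)); auto; intros; apply SubBU_SBranch; eauto.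
  - apply SubBU_SSelect in HV as [-> | [p' Hp' HV]]; [apply subst_origin_self|].
    apply in_map_iff in Hp' as [p [<- Hp]].
    apply (subst_origin_mono sigma (snd p)); auto; intros; apply SubBU_SSelect; eauto.
Qed.

Theorem mainTheorem2 (T Q : stype) (x : nat) (S : stype) :
  SubBU (substX T Q x) S ->
  (exists S', SubBU T S' /\ S = substX S' Q x) \/ SubBU Q S.
Proof.
  intros HS; destruct (SubBU_subst_inv _ _ _ HS) as [[S' HS' ->] | [n Hn HQ]].
  - left; exists S'; auto.
  - unfold single in HQ; destruct (Nat.eqb_spec n x) as [-> | Hnx]; [now right|].
    left; exists (SVar n); split; [exact Hn|].
    simpl in HQ; subst S; unfold substX, single; simpl.
    now rewrite (proj2 (Nat.eqb_neq n x) Hnx).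
Qed.
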